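(* Let $r>1$ and let $k,\ell,m$ be positive integers with $m\ge 12r$. Let $x_0\in R_1\cup\dots\cup R_\ell$ be a reservoir vertex of the $(k,\ell,m)$-superstar, and run the Moran process with fitness $r$ on the superstar with initial mutant $x_0$. Then the extinction probability is at least $1/(26r^2\ell)$.
   Context: Moran process: given a directed graph $G$ and fitness $r$, one vertex $x_0$ is a mutant, the rest non-mutants. At each step a vertex $v$ is chosen with probability proportional to fitness (mutants $r$, non-mutants $1$), an out-neighbour $w$ of $v$ is chosen uniformly at random and the state of $v$ is copied to $w$. Extinction: eventually no vertex is a mutant. The $(k,\ell,m)$-superstar has vertex set the disjoint union of reservoirs $R_1,\dots,R_\ell$ of size $m$, vertices $v_{i,j}$ ($i\in[\ell]$, $j\in[k]$), and a centre $v^*$; its edges are, for each $i\in[\ell]$: from $v^*$ to every vertex of $R_i$, from every vertex of $R_i$ to $v_{i,1}$, from $v_{i,j}$ to $v_{i,j+1}$ for $j\in[k-1]$, and from $v_{i,k}$ to $v^*$. *)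

From HB Require Import structures.
From mathcomp Require Import all_boot all_order all_algebra.
From mathcomp Require Import classical_sets reals.
Set Implicit Arguments. Unset Strict Implicit. Unset Printing Implicit Defensive.
Import Order.TTheory GRing.Theory Num.Theory.
Local Open Scope ring_scope.

Section Moran.
Variables (R : realType) (V : finType) (e : rel V) (r : R).

Definition fitness (S : {set V}) (v : V) : R := if v \in S then r else 1.

Definition total_fitness (S : {set V}) : R := \sum_(v : V) fitness S v.

Definition outdeg (v : V) : nat := #|[set w | e v w]|.

(* state after v reproduces onto w *)
Definition step_state (S : {set V}) (v w : V) : {set V} :=
  if v \in S then w |: S else S :\ w.

(* ext_by n S = probability that, starting from mutant set S, the
   Moran process has no mutant after n steps (= is extinct by time n,
   since the empty state is absorbing). *)
Fixpoint ext_by (n : nat) (S : {set V}) : R :=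
  match n with
  | 0%N => (S == finset.set0)%:R
  | n'.+1 => \sum_(v : V) \sum_(w | e v w)
              (fitness S v / total_fitness S) / (outdeg v)%:R
              * ext_by n' (step_state S v w)
  end.

(* extinction probability = probability of eventually reaching no mutants
   = supremum (limit) of the nondecreasing sequence ext_by n S. *)
Definition extinction_prob (S : {set V}) : R :=
  sup (range (fun n => ext_by n S)).

End Moran.

(* The (k,l,m)-superstar. Vertices:
   inl (inl (i,j)) : j-th vertex of reservoir R_{i+1}
   inl (inr (i,j)) : v_{i+1,j+1}
   inr tt          : centre v^* *)
Definition superstar_vertex (k l m : nat) : finType :=
  (('I_l * 'I_m) + ('I_l * 'I_k) + unit)%type.

Definition superstar_edge (k l m : nat) : rel (superstar_vertex k l m) :=
  fun u v =>
  match u, v with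
  | inr _, inl (inl _) => true
  | inl (inl (i, _)), inl (inr (i', j')) => (i == i') && (val j' == 0%N)
  | inl (inr (i, j)), inl (inr (i', j')) => (i == i') && (val j' == (val j).+1)
  | inl (inr (_, j)), inr _ => val j == k.-1
  | _, _ => false
  end.

(* Two states suffice: S1 = {x0} and S2 = {x0, v_{i,1}}. From S1 the centre overwrites x0 with
   probability at least 1/(lm) each time it fires, while x0 invades v_{i,1} at rate r; from S2 each
   of the m - 1 other vertices of R_i overwrites v_{i,1}, returning to S1. Discarding every other
   transition yields coupled linear lower recurrences for the n-step extinction probabilities p_n
   (from S1) and q_n (from S2). They admit a sub-fixed point (A, B) with A = 1/(13 r^2 l), which
   attracts (p_n, q_n) geometrically, so p_n >= A/2 for large n, and extinction_prob is the
   supremum of the p_n. *)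

From HB Require Import structures.
From mathcomp Require Import all_boot all_order all_algebra.
From mathcomp Require Import classical_sets reals.
From mathcomp Require Import ring lra zify.
Import Order.TTheory GRing.Theory Num.Theory.
Set Implicit Arguments. Unset Strict Implicit. Unset Printing Implicit Defensive.
Local Open Scope ring_scope.

Section MoranProcess.
Variables (R : realType) (V : finType) (e : rel V) (r : R).
Hypothesis r_ge1 : 1 <= r.

Lemma fitness_gt0 (S : {set V}) v : 0 < fitness r S v.
Proof. by rewrite /fitness; case: ifP => // _; apply: lt_le_trans r_ge1. Qed.

Lemma total_fitness_ge_sum (S D : {set V}) :
  \sum_(v in D) fitness r S v <= total_fitness r S.
Proof.
rewrite /total_fitness [X in _ <= X](bigID (mem D)) /= lerDl.
by apply: sumr_ge0 => v _; apply: ltW; apply: fitness_gt0.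
Qed.

Lemma total_fitness_gt0 (S : {set V}) (v : V) : 0 < total_fitness r S.
Proof.
apply: lt_le_trans (fitness_gt0 S v) _.
by move: (total_fitness_ge_sum S [set v]); rewrite big_set1.
Qed.

Lemma total_fitness_subset (S T : {set V}) :
  S \subset T -> total_fitness r S <= total_fitness r T.
Proof.
move=> /fintype.subsetP ST; apply: ler_sum => v _; rewrite /fitness.
by case: ifP => [/ST ->|_]; [|case: ifP].
Qed.

Lemma jump_prob_ge0 (S : {set V}) v : 0 <= fitness r S v / total_fitness r S.
Proof.
by apply: divr_ge0; apply: ltW; [apply: fitness_gt0 | apply: total_fitness_gt0 v].
Qed.

Lemma sum_jump_prob (S : {set V}) (v : V) :
  \sum_u fitness r S u / total_fitness r S = 1.
Proof. by rewrite -mulr_suml mulfV // gt_eqF // (total_fitness_gt0 S v). Qed.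

Lemma step_state_id (S : {set V}) v w : (v \in S) = (w \in S) -> step_state S v w = S.
Proof.
rewrite /step_state; case: ifP => _ wS.
- by apply/finset.setUidPr; rewrite finset.sub1set -wS.
- by apply/finset.setDidPl; rewrite disjoint_sym disjoints1 -wS.
Qed.

Hypothesis outdeg_gt0 : forall v, (0 < outdeg e v)%N.

Lemma sum_uniform_outneighbour v (c : R) :
  \sum_(w | e v w) c / (outdeg e v)%:R = c.
Proof.
rewrite sumr_const -[LHS]mulr_natr.
have -> : #|[pred w | e v w]| = outdeg e v by rewrite /outdeg cardsE.
by rewrite mulfVK // pnatr_eq0 -lt0n.
Qed.

Lemma move_prob_ge0 (S : {set V}) v : 0 <= fitness r S v / total_fitness r S / (outdeg e v)%:R.
Proof. by rewrite divr_ge0 ?jump_prob_ge0 ?ler0n. Qed.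

Lemma ext_by_ge0 n (S : {set V}) : 0 <= ext_by e r n S.
Proof.
elim: n S => [|n IH] S /=; first exact: ler0n.
by do 2![apply: sumr_ge0 => ? _]; rewrite mulr_ge0 ?move_prob_ge0.
Qed.

Lemma ext_by_le1 n (S : {set V}) : ext_by e r n S <= 1.
Proof.
elim: n S => [|n IH] S /=; first by case: (S == _); rewrite ?ler01 ?lexx.
case: (pickP (@predT V)) => [v0 _|noV]; last by rewrite big_pred0 ?ler01.
rewrite -[X in _ <= X](sum_jump_prob S v0); apply: ler_sum => v _.
rewrite -[X in _ <= X](sum_uniform_outneighbour v); apply: ler_sum => w _.
by rewrite -[X in _ <= X]mulr1; apply: ler_wpM2l; [exact: move_prob_ge0|exact: IH].
Qed.

Lemma ext_by_set0 (v0 : V) n : ext_by e r n finset.set0 = 1.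
Proof.
elim: n => [|n IH] /=; first by rewrite eqxx.
rewrite -[RHS](sum_jump_prob finset.set0 v0); apply: eq_bigr => v _.
rewrite -[RHS](sum_uniform_outneighbour v); apply: eq_bigr => w _.
have -> : step_state finset.set0 v w = finset.set0 by rewrite /step_state inE finset.set0D.
by rewrite IH mulr1.
Qed.

Lemma ext_by_step_const n (S T : {set V}) v :
  (forall w, e v w -> step_state S v w = T) ->
  \sum_(w | e v w) fitness r S v / total_fitness r S / (outdeg e v)%:R
      * ext_by e r n (step_state S v w) =
  fitness r S v / total_fitness r S * ext_by e r n T.
Proof.
move=> hT; rewrite -[X in _ = X * _](sum_uniform_outneighbour v) mulr_suml.
by apply: eq_bigr => w ew; rewrite hT.
Qed.

Lemma ext_byS_split (v0 : V) n (S D : {set V}) :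
  (forall v, v \notin D -> forall w, e v w -> step_state S v w = S) ->
  ext_by e r n.+1 S =
  (1 - \sum_(v in D) fitness r S v / total_fitness r S) * ext_by e r n S +
  \sum_(v in D) \sum_(w | e v w) fitness r S v / total_fitness r S
      / (outdeg e v)%:R * ext_by e r n (step_state S v w).
Proof.
move=> hD /=; rewrite (bigID (mem D)) /= addrC; congr (_ + _).
rewrite -[X in X - _](sum_jump_prob S v0) [X in X - _](bigID (mem D)) /=.
rewrite [X in X - _]addrC addrK mulr_suml.
by apply: eq_bigr => v nDv; apply: ext_by_step_const; apply: hD.
Qed.

Lemma ext_by_le_extinction_prob n (S : {set V}) : ext_by e r n S <= extinction_prob e r S.
Proof.
apply: ub_le_sup; last by exists n.
by exists 1 => _ [n' _ <-]; apply: ext_by_le1.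
Qed.

End MoranProcess.

Lemma Bernoulli_one_subr (R : realFieldType) (c : R) n :
  0 <= c <= 1 -> (1 - c) ^+ n * (1 + n%:R * c) <= 1.
Proof.
case/andP=> c0 c1; elim: n => [|n IH]; first by rewrite expr0 mul0r addr0 mulr1.
apply: le_trans IH; rewrite exprSr -mulrA ler_wpM2l ?exprn_ge0 ?subr_ge0 //.
have : 0 <= n%:R * (c * c) by rewrite mulr_ge0 ?mulr_ge0.
by rewrite -natr1; nra.
Qed.

Lemma exists_expr_one_subr_le (R : archiRealFieldType) (c eps : R) :
  0 < c <= 1 -> 0 < eps -> exists n, (1 - c) ^+ n <= eps.
Proof.
case/andP=> c_gt0 c_le1 eps_gt0; set n := Num.Def.archi_bound (eps^-1 / c).
have : eps^-1 / c < n%:R by apply: archi_boundP; rewrite divr_ge0 ?invr_ge0 ?ltW.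
rewrite ltr_pdivrMr // -(ltr_pM2l eps_gt0) mulfV ?gt_eqF // => eps_nc_gt1.
exists n; have c01 : 0 <= c <= 1 by rewrite ltW.
have := Bernoulli_one_subr n c01; have : 0 <= (1 - c) ^+ n by rewrite exprn_ge0 // subr_ge0.
move: eps_nc_gt1; set x := _ ^+ n; set N := _ * c; nra.
Qed.

Section CoupledRecurrence.
Variables (R : realFieldType) (p q : nat -> R) (a b r e e0 t A B : R).
Hypotheses (a_gt0 : 0 < a) (a_le_b : a <= b) (e0_gt0 : 0 < e0) (e0_le_e : e0 <= e)
  (e0_le : e0 <= 1 + r) (r_ge0 : 0 <= r) (t_ge0 : 0 <= t)
  (stayA_ge0 : 0 <= a - r - e) (stayB_ge0 : 0 <= b - 1 - r - t).
Hypotheses (fixA : 0 <= e - (r + e) * A + r * B) (fixB : (1 + r) * B <= t * (A - B)).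
Hypotheses (A_le1 : A <= 1) (B_le1 : B <= 1) (p0_ge0 : 0 <= p 0) (q0_ge0 : 0 <= q 0).
Hypothesis recA : forall n, (a - r - e) * p n + r * q n + e <= a * p n.+1.
Hypothesis recB : forall n, (b - 1 - r - t) * q n + t * p n <= b * q n.+1.

(* The deficits [A - p n] and [B - q n] both contract by the factor [1 - e0 / b]. *)
Lemma coupled_recurrence_lower n :
  A - (1 - e0 / b) ^+ n <= p n /\ B - (1 - e0 / b) ^+ n <= q n.
Proof.
have b_gt0 : 0 < b by apply: lt_le_trans a_le_b.
have rho_ge0 : 0 <= 1 - e0 / b by rewrite subr_ge0 ler_pdivrMr // mul1r; move: e0_le_e stayA_ge0 r_ge0 a_le_b; lra.
elim: n => [|n [IHp IHq]]; first by rewrite expr0; move: A_le1 B_le1 p0_ge0 q0_ge0; lra.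
rewrite exprSr; set z := _ ^+ n in IHp IHq *.
have z_ge0 : 0 <= z by apply: exprn_ge0.
have : (a - r - e) * (A - z) <= (a - r - e) * p n by apply: ler_wpM2l.
have : r * (B - z) <= r * q n by apply: ler_wpM2l.
have : (b - 1 - r - t) * (B - z) <= (b - 1 - r - t) * q n by apply: ler_wpM2l.
have : t * (A - z) <= t * p n by apply: ler_wpM2l.
have : e0 * z <= e * z by apply: ler_wpM2r.
have : e0 * z <= (1 + r) * z by apply: ler_wpM2r.
have ab_le1 : a / b <= 1 by rewrite ler_pdivrMr // mul1r.
have : a / b * (e0 * z) <= e0 * z by rewrite ler_piMl // mulr_ge0 // ltW.
split.
- rewrite -(ler_pM2l a_gt0); apply: le_trans (recA n).
  have -> : a * (A - z * (1 - e0 / b)) = a * A - a * z + a / b * (e0 * z).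
    by field; rewrite gt_eqF.
  move: fixA; lra.
- rewrite -(ler_pM2l b_gt0); apply: le_trans (recB n).
  have -> : b * (B - z * (1 - e0 / b)) = b * B - b * z + e0 * z.
    by field; rewrite gt_eqF.
  move: fixB; lra.
Qed.

End CoupledRecurrence.

Lemma fixed_point_slack (R : realFieldType) (r L M e A B : R) :
  1 <= r -> 1 <= L -> 1 <= M -> 1 <= L * M * e ->
  13 * r ^+ 2 * L * A = 1 -> (M + r) * B = (M - 1) * A ->
  0 <= e - (r + e) * A + r * B.
Proof.
move=> r_ge1 L_ge1 M_ge1 LMe hA hB.
have rrL : 1 <= r ^+ 2 * L by rewrite expr2; nra.
have A_gt0 : 0 < A by nra.
suff : 0 <= (M + r) * (e - (r + e) * A + r * B) by rewrite pmulr_rge0 //; lra.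
have -> : (M + r) * (e - (r + e) * A + r * B) = (M + r) * e * (1 - A) - r * (1 + r) * A.
  by rewrite mulrDr mulrCA hB; ring.
have e_ge0 : 0 <= e.
  have : 1 <= L * M by nra.
  by move: LMe; set N := L * M; nra.
have A_le : 13 * A <= 1 by nra.
have : 12 <= 13 * L * ((M + r) * e * (1 - A)).
  have : 0 <= L * r * e * (1 - A) by rewrite !mulr_ge0 //; lra.
  nra.
have : 13 * L * (r * (1 + r) * A) <= 2.
  have : r * (1 + r) * A <= 2 * r ^+ 2 * A by rewrite expr2; nra.
  nra.
move: ((M + r) * e * (1 - A)) (r * (1 + r) * A) => X Y; nra.
Qed.

Lemma two_state_sub_fixed_point (R : realFieldType) (r L M d t : R) :
  1 <= r -> 1 <= L -> 1 <= M -> 1 <= d <= L * M -> t = M - 1 ->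
  exists A B : R, [/\ A / 2 = 1 / (26 * r ^+ 2 * L), 0 < A <= 1, B <= A,
    0 <= 1 / d - (r + 1 / d) * A + r * B & (1 + r) * B <= t * (A - B)].
Proof.
move=> r_ge1 L_ge1 M_ge1 /andP[d_ge1 d_le] t_eq.
pose A := 1 / (13 * r ^+ 2 * L); pose B := (M - 1) * A / (M + r); exists A, B.
have r_neq0 : r != 0 by rewrite gt_eqF //; lra.
have L_neq0 : L != 0 by rewrite gt_eqF //; lra.
have Mr_neq0 : M + r != 0 by rewrite gt_eqF //; lra.
have A_gt0 : 0 < A by rewrite divr_gt0 // !mulr_gt0 ?exprn_gt0 //; lra.
have hA : 13 * r ^+ 2 * L * A = 1 by rewrite /A; field; rewrite r_neq0 L_neq0.
have hB : (M + r) * B = (M - 1) * A by rewrite /B; field.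
have AB : A - B = (1 + r) * A / (M + r) by rewrite /B; field.
have A_half : A / 2 = 1 / (26 * r ^+ 2 * L) by rewrite /A; field; rewrite r_neq0 L_neq0.
clearbody A B.
have AB_ge0 : 0 <= A - B by rewrite AB divr_ge0 ?mulr_ge0 //; lra.
have rrL : 1 <= r ^+ 2 * L by rewrite expr2; nra.
have LMe_ge1 : 1 <= L * M * (1 / d) by rewrite mul1r ler_pdivlMr; lra.
split=> //; first (by apply/andP; split=> //; nra); first by lra.
- exact: (fixed_point_slack r_ge1 L_ge1 M_ge1 LMe_ge1 hA hB).
- by rewrite t_eq; nra.
Qed.

Lemma two_state_lower_bound (R : archiRealFieldType) (p q : nat -> R) (r L M d t W1 W2 : R) :
  1 <= r -> 1 <= L -> 1 <= M -> 1 <= d <= L * M -> t = M - 1 ->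
  r + 1 <= W1 -> W1 <= W2 -> 1 + r + t <= W2 -> 0 <= p 0 -> 0 <= q 0 ->
  (forall n, W1 * p n.+1 = (W1 - r - 1 / d) * p n + r * q n + 1 / d) ->
  (forall n, (W2 - 1 - r - t) * q n + t * p n <= W2 * q n.+1) ->
  exists n, 1 / (26 * r ^+ 2 * L) <= p n.
Proof.
move=> r_ge1 L_ge1 M_ge1 dLM t_eq W1_ge W1_le W2_ge p0_ge0 q0_ge0 recA recB.
have [A [B [<- /andP[A_gt0 A_le1] B_le_A fixA fixB]]] :=
  two_state_sub_fixed_point r_ge1 L_ge1 M_ge1 dLM t_eq.
case/andP: dLM => d_ge1 d_le.
have LM_gt0 : 0 < L * M by rewrite mulr_gt0 //; lra.
have e0_gt0 : 0 < 1 / (L * M) by rewrite divr_gt0.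
have e0_le_e : 1 / (L * M) <= 1 / d by rewrite ler_pdivrMr // mulrAC ler_pdivlMr ?mul1r //; lra.
have d_inv_le1 : 1 / d <= 1 by rewrite ler_pdivrMr ?mul1r //; lra.
have W2_gt0 : 0 < W2 by lra.
have c01 : 0 < 1 / (L * M) / W2 <= 1 by rewrite divr_gt0 // ler_pdivrMr ?mul1r //; lra.
have A_half_gt0 : 0 < A / 2 by lra.
have [n small] := exists_expr_one_subr_le c01 A_half_gt0.
have W1_gt0 : 0 < W1 by lra.
have r_ge0 : 0 <= r by lra.
have t_ge0 : 0 <= t by lra.
have e0_le : 1 / (L * M) <= 1 + r by lra.
have stayA : 0 <= W1 - r - 1 / d by lra.
have stayB : 0 <= W2 - 1 - r - t by lra.
have B_le1 : B <= 1 by lra.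
have recA_le k : (W1 - r - 1 / d) * p k + r * q k + 1 / d <= W1 * p k.+1 by rewrite recA.
have [p_ge _] := coupled_recurrence_lower W1_gt0 W1_le e0_gt0 e0_le_e e0_le r_ge0 t_ge0
  stayA stayB fixA fixB A_le1 B_le1 p0_ge0 q0_ge0 recA_le recB n.
by exists n; lra.
Qed.

Section SuperstarGraph.
Variables (k l m : nat) (hk : (0 < k)%N) (hl : (0 < l)%N) (hm : (0 < m)%N).
Local Notation V := (superstar_vertex k l m).
Local Notation e := (@superstar_edge k l m).

Definition centre : V := inr tt.
Definition reservoir i j : V := inl (inl (i, j)).
Definition chain_start i : V := inl (inr (i, Ordinal hk)).

Lemma outdeg_superstar_gt0 v : (0 < outdeg e v)%N.
Proof.
rewrite /outdeg; apply/card_gt0P.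
case: v => [[[i j]|[i j]]|[]].
- by exists (chain_start i); rewrite inE /= eqxx.
- case: (eqVneq (val j) k.-1) => hj; first by exists centre; rewrite inE /= hj.
  have hj1 : (j.+1 < k)%N by move: (ltn_ord j) hj => /= ? ?; lia.
  by exists (inl (inr (i, Ordinal hj1))); rewrite inE /= !eqxx.
- by exists (reservoir (Ordinal hl) (Ordinal hm)); rewrite inE.
Qed.

Lemma superstar_edge_reservoir i j w : e (reservoir i j) w -> w = chain_start i.
Proof.
case: w => [[[i' j']|[i' j']]|[]] //= /andP[/eqP <- /eqP j'0].
by congr (inl (inr (_, _))); apply: val_inj.
Qed.

Lemma superstar_edge_to_reservoir v i j : e v (reservoir i j) -> v = centre.
Proof. by case: v => [[[i' j']|[i' j']]|[]]. Qed.

Lemma superstar_edge_to_chain_start v i :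
  e v (chain_start i) -> exists j, v = reservoir i j.
Proof.
case: v => [[[i' j']|[i' j']]|[]] //=; first by case/andP=> /eqP -> _; exists j'.
by rewrite andbF.
Qed.

Lemma outdeg_centre_le : (outdeg e centre <= l * m)%N.
Proof.
rewrite /outdeg; have -> : [set w | e centre w] = [set reservoir p.1 p.2 | p in [set: 'I_l * 'I_m]].
  apply/setP => w; rewrite inE; apply/idP/imsetP => [|[[i j] _ ->] //].
  by case: w => [[[i j]|//]|//] _; exists (i, j); rewrite ?inE.
by rewrite (leq_trans (leq_imset_card _ _)) // cardsT card_prod !card_ord.
Qed.

End SuperstarGraph.

Section SuperstarRecurrences.
Variables (k l m : nat) (hk : (0 < k)%N) (hl : (0 < l)%N) (hm : (0 < m)%N).
Variables (i : 'I_l) (j : 'I_m) (R : realType) (r : R).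
Hypothesis r_ge1 : 1 <= r.
Local Notation V := (superstar_vertex k l m).
Local Notation e := (@superstar_edge k l m).
Local Notation outdeg_gt0 := (outdeg_superstar_gt0 hk hl hm).

Let x0 : V := reservoir k i j.
Let v1 : V := chain_start m hk i.
Let cen : V := centre k l m.
Let S1 : {set V} := [set x0].
Let S2 : {set V} := v1 |: S1.
Let p n := ext_by e r n S1.
Let q n := ext_by e r n S2.
Let W1 := total_fitness r S1.
Let W2 := total_fitness r S2.
Let d : R := (outdeg e cen)%:R.
Let L : R := l%:R.
Let M : R := m%:R.

Lemma superstar_recurrence1 n : W1 * p n.+1 = (W1 - r - 1 / d) * p n + r * q n + 1 / d.
Proof.
have W1_gt0 : 0 < W1 := total_fitness_gt0 r_ge1 S1 x0.
have d_gt0 : 0 < d by rewrite ltr0n outdeg_gt0.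
have stay v w : v != x0 -> w != x0 -> step_state S1 v w = S1.
  by move=> vx wx; apply: step_state_id; rewrite !inE (negbTE vx) (negbTE wx).
rewrite /p (ext_byS_split r_ge1 outdeg_gt0 x0 _ (D := [set x0; cen])); last first.
  move=> v; rewrite !inE => /norP[vx vc] w ew; apply: stay => //.
  by apply: contra vc => /eqP wx; move: ew; rewrite wx => /superstar_edge_to_reservoir ->.
rewrite !big_setU1 ?inE //= !big_set1.
rewrite (ext_by_step_const r outdeg_gt0 n (T := S2) (v := x0)) => [|w /superstar_edge_reservoir ->]; last first.
  by rewrite /step_state inE eqxx.
rewrite (bigD1 x0) //=.
have -> : step_state S1 cen x0 = finset.set0.
  by rewrite /step_state inE /=; apply/setP => u; rewrite !inE; case: eqP.
rewrite (ext_by_set0 r_ge1 outdeg_gt0 x0).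
have -> : \sum_(w | e cen w && (w != x0)) fitness r S1 cen / W1 / d * ext_by e r n (step_state S1 cen w)
    = (fitness r S1 cen / W1 - fitness r S1 cen / W1 / d) * p n.
  rewrite -[X in (X - _) * _](sum_uniform_outneighbour outdeg_gt0 cen).
  rewrite [X in (X - _) * _](bigD1 x0) //= addrC addrK mulr_suml.
  by apply: eq_bigr => w /andP[_ wx]; rewrite stay.
rewrite /fitness !inE eqxx /= -/W1 -/d.
by rewrite /p /q; field; rewrite !gt_eqF.
Qed.

Let mates : {set V} := [set reservoir k i j' | j' in [set~ j]].
Let t : R := #|mates|%:R.
Let D2 : {set V} := cen |: (v1 |: mates).

Lemma mem_superstar_mates v :
  (v \in mates) = if v is inl (inl (i', j')) then (i' == i) && (j' != j) else false.
Proof.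
apply/imsetP/idP => [[j' j'j ->]|]; first by rewrite /= eqxx -in_setC1.
by case: v => [[[i' j']|//]|//] /andP[/eqP -> j'j]; exists j'; rewrite ?inE.
Qed.

Lemma superstar_mates_notin v : v \in mates -> v \notin S2.
Proof.
rewrite mem_superstar_mates; case: v => [[[i' j']|//]|//] /andP[/eqP -> j'j].
by rewrite !inE /=; apply/eqP => -[] /eqP; rewrite (negbTE j'j).
Qed.

Lemma superstar_fitness_sum2 : \sum_(v in D2) fitness r S2 v = 1 + r + t.
Proof.
rewrite !big_setU1 ?inE ?mem_superstar_mates //= (eq_bigr (fun _ => 1)).
  by rewrite sumr_const /fitness !inE eqxx /= addrA.
by move=> v /superstar_mates_notin vS; rewrite /fitness (negbTE vS).
Qed.

Lemma superstar_step_outside_D2 v : v \notin D2 -> forall w, e v w -> step_state S2 v w = S2.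
Proof.
rewrite !inE negb_or => /andP[vc /norP[vv1 vm]] w ew; apply: step_state_id.
have [vx|vx] := eqVneq v x0.
  by move: ew; rewrite vx => /superstar_edge_reservoir ->; rewrite !inE !eqxx orbT.
have wx : w != x0.
  by apply: contra vc => /eqP wx; move: ew; rewrite wx => /superstar_edge_to_reservoir ->.
have wv1 : w != v1.
  apply: contra vm => /eqP wv1; move: ew vx; rewrite wv1 => /superstar_edge_to_chain_start [j' ->].
  by rewrite mem_superstar_mates /reservoir /= eqxx /=; apply: contra => /eqP ->.
by rewrite !inE (negbTE vx) (negbTE vv1) (negbTE wx) (negbTE wv1).
Qed.

Lemma superstar_recurrence2 n : (W2 - 1 - r - t) * q n + t * p n <= W2 * q n.+1.
Proof.
have W2_gt0 : 0 < W2 := total_fitness_gt0 r_ge1 S2 x0.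
have mate_moves v : v \in mates -> \sum_(w | e v w) fitness r S2 v / W2 / (outdeg e v)%:R
    * ext_by e r n (step_state S2 v w) = 1 / W2 * p n.
  move=> vm; have vS := superstar_mates_notin vm.
  rewrite (ext_by_step_const r outdeg_gt0 n (T := S1)) => [|w]; first by rewrite /fitness (negbTE vS).
  move: vm vS; rewrite mem_superstar_mates; case: v => [[[i' j']|//]|//] /andP[/eqP -> _] vS.
  by move=> /superstar_edge_reservoir ->; rewrite /step_state (negbTE vS) setU1K // !inE.
have moves_ge0 v : 0 <= \sum_(w | e v w) fitness r S2 v / W2 / (outdeg e v)%:R
    * ext_by e r n (step_state S2 v w).
  by apply: sumr_ge0 => w _; rewrite mulr_ge0 ?move_prob_ge0 ?ext_by_ge0.
rewrite /q (ext_byS_split r_ge1 outdeg_gt0 x0 n superstar_step_outside_D2) -mulr_suml superstar_fitness_sum2.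
rewrite !big_setU1 ?inE ?mem_superstar_mates // (eq_bigr _ mate_moves) sumr_const.
have := moves_ge0 cen; have := moves_ge0 v1.
set C := \sum_(w | e cen w) _; set C1 := \sum_(w | e v1 w) _ => C1_ge0 C_ge0 /=.
rewrite -[_ *+ #|mates|]mulr_natr -/t -/W2.
have -> : W2 * ((1 - (1 + r + t) / W2) * ext_by e r n S2 + (C + (C1 + 1 / W2 * p n * t)))
    = (W2 - 1 - r - t) * ext_by e r n S2 + t * p n + W2 * (C + C1).
  by field; rewrite gt_eqF.
by rewrite lerDl mulr_ge0 ?addr_ge0 // ltW.
Qed.

Lemma superstar_weight1_ge : r + 1 <= W1.
Proof.
by move: (total_fitness_ge_sum r_ge1 S1 [set x0; cen]); rewrite big_setU1 ?big_set1 /fitness !inE ?eqxx.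
Qed.

Lemma superstar_weight2_ge : 1 + r + t <= W2.
Proof. by rewrite -superstar_fitness_sum2 total_fitness_ge_sum. Qed.

Lemma superstar_weight1_le2 : W1 <= W2.
Proof. by apply: (total_fitness_subset r_ge1); rewrite /S2 finset.subsetUr. Qed.

Lemma superstar_mates_card : t = M - 1.
Proof.
rewrite /t card_imset ?cardsC1 ?card_ord; last by move=> a b [].
by rewrite /M -{2}(prednK hm) -natr1 addrK.
Qed.

Lemma superstar_outdeg_centre_bounds : 1 <= d <= L * M.
Proof. by rewrite /d /L /M -natrM ler1n ler_nat outdeg_superstar_gt0 // outdeg_centre_le. Qed.

Lemma superstar_ext_by_ge : exists n, 1 / (26 * r ^+ 2 * L) <= p n.
Proof.
apply: (two_state_lower_bound r_ge1 _ _ superstar_outdeg_centre_bounds superstar_mates_card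
  superstar_weight1_ge superstar_weight1_le2 superstar_weight2_ge _ _ superstar_recurrence1
  superstar_recurrence2); rewrite ?ler1n ?ext_by_ge0 //.
Qed.

End SuperstarRecurrences.

Theorem lemma4p3 (R : realType) (k l m : nat) (r : R)
  (hk : (0 < k)%N) (hl : (0 < l)%N) (hm : (0 < m)%N)
  (hr : 1 < r) (hm12 : 12 * r <= m%:R)
  (i : 'I_l) (j : 'I_m) :
  1 / (26 * r ^+ 2 * l%:R) <=
    extinction_prob (@superstar_edge k l m) r
      [set (inl (inl (i, j)) : superstar_vertex k l m)].
Proof.
have r_ge1 : 1 <= r := ltW hr.
have [n ext_n] := superstar_ext_by_ge hk hl hm i j r_ge1.
exact: le_trans ext_n (ext_by_le_extinction_prob r_ge1 (outdeg_superstar_gt0 hk hl hm) _ _).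
Qed.
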